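(* Let $(X,L)$ be a normal polarised variety and $D\subset X$ a divisor. If $(X,L)$ is K-semistable and $((X,D);L)$ is log K-stable with angle $\beta\in[0,1]$, then $((X,D);L)$ is log K-stable with angle $\gamma$ for every $\gamma$ with $\beta\le\gamma<1$.
   Context: A test configuration $(\mathcal{X},\mathcal{L})$ for a normal polarised variety $(X,L)$ is a normal variety $\mathcal{X}$ with a proper flat morphism $\pi:\mathcal{X}\to\mathbb{C}$, a $\mathbb{C}^*$-action on $\mathcal{X}$ covering the standard action on $\mathbb{C}$, and a $\mathbb{C}^*$-equivariant relatively ample line bundle $\mathcal{L}$ with $(\mathcal{X}_t,\mathcal{L}_t)\cong(X,L^r)$ for $t\ne0$ (some $r>0$). It is trivial if isomorphic to $X\times\mathbb{C}$ with trivial action on $X$. With $n=\dim X$, write $\dim H^0(\mathcal{X}_0,\mathcal{L}_0^k)=a_0k^n+a_1k^{n-1}+O(k^{n-2})$ and the total $\mathbb{C}^*$-weight on $H^0(\mathcal{X}_0,\mathcal{L}_0^k)$ as $b_0k^{n+1}+b_1k^n+O(k^{n-1})$. The Donaldson–Futaki invariant is $\mathrm{DF}=\frac{b_0a_1-b_1a_0}{a_0}$; $(X,L)$ is K-semistable if $\mathrm{DF}\ge0$ for all test configurations. Let $\mathcal{D}\subset\mathcal{X}$ be the closure of the $\mathbb{C}^*$-orbit of $D$; write $\dim H^0(\mathcal{D}_0,\mathcal{L}_0^k|_{\mathcal{D}_0})=\tilde a_0k^{n-1}+O(k^{n-2})$ and its total weight $\tilde b_0k^n+O(k^{n-1})$.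 For $0\le\beta\le1$, $\mathrm{DF}_\beta((\mathcal{X},\mathcal{D});\mathcal{L})=\frac{b_0a_1-b_1a_0}{a_0}+(1-\beta)\frac{a_0\tilde b_0-b_0\tilde a_0}{2a_0}$, and $((X,D);L)$ is log K-stable with angle $\beta$ if $\mathrm{DF}_\beta>0$ for every nontrivial test configuration. *)

From Stdlib Require Import Reals.
Open Scope R_scope.

(* Numerical data attached to a test configuration (X_cal, L_cal) of (X,L)
   together with the closure D_cal of the C^*-orbit of D:
     dim H^0(X_0, L_0^k)           = a0 k^n     + a1 k^(n-1) + O(k^(n-2))
     total weight on it            = b0 k^(n+1) + b1 k^n     + O(k^(n-1))
     dim H^0(D_0, L_0^k|D_0)       = ta0 k^(n-1) + O(k^(n-2))
     total weight on it            = tb0 k^n     + O(k^(n-1)) *)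
Record TCData := mkTCData {
  a0 : R; a1 : R; b0 : R; b1 : R; ta0 : R; tb0 : R
}.

Definition DF (d : TCData) : R :=
  (b0 d * a1 d - b1 d * a0 d) / a0 d.

Definition DF_log (beta : R) (d : TCData) : R :=
  (b0 d * a1 d - b1 d * a0 d) / a0 d
  + (1 - beta) * ((a0 d * tb0 d - b0 d * ta0 d) / (2 * a0 d)).

(* TC : the type of all test configurations of (X,L) (each carrying the
   orbit closure of D); data t : its numerical invariants;
   trivial t : t is the trivial test configuration. *)
Definition K_semistable (TC : Type) (data : TC -> TCData) : Prop :=
  forall t : TC, 0 <= DF (data t).

Definition log_K_stable (TC : Type) (data : TC -> TCData)
  (trivial : TC -> Prop) (beta : R) : Prop :=
  forall t : TC, ~ trivial t -> 0 < DF_log beta (data t).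

(* The log Donaldson--Futaki invariant is affine in the angle: it equals
   DF + (1 - angle) * E for a correction term E independent of the angle.
   Between the values DF >= 0 (angle 1) and DF_log beta > 0, an affine
   function stays positive on the half-open segment of angles [beta, 1). *)

From Stdlib Require Import Reals Lra.
Open Scope R_scope.

Definition log_correction (d : TCData) : R :=
  (a0 d * tb0 d - b0 d * ta0 d) / (2 * a0 d).

Lemma DF_log_affine (beta : R) (d : TCData) :
  DF_log beta d = DF d + (1 - beta) * log_correction d.
Proof. reflexivity. Qed.

(* [s * (A + s' E) = (s - s') A + s' (A + s E)], a positive combination. *)
Lemma affine_pos_shrink (A E s s' : R) :
  0 <= A -> 0 < A + s * E -> 0 < s' <= s -> 0 < A + s' * E.
Proof.
  intros HA Hs Hs'.
  assert (Hcomb : s * (A + s' * E) = (s - s') * A + s' * (A + s * E)) by ring.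
  assert (Hprod : 0 < s * (A + s' * E)).
  { rewrite Hcomb.
    assert (0 <= (s - s') * A) by (apply Rmult_le_pos; lra).
    assert (0 < s' * (A + s * E)) by (apply Rmult_lt_0_compat; lra).
    lra. }
  apply (Rmult_lt_reg_l s); lra.
Qed.

Theorem lemma2p4 (TC : Type) (data : TC -> TCData) (trivial : TC -> Prop)
  (beta : R)
  (Ha0 : forall t : TC, 0 < a0 (data t))
  (Hbeta : 0 <= beta <= 1)
  (Hss : K_semistable TC data)
  (Hlog : log_K_stable TC data trivial beta) :
  forall gamma : R, beta <= gamma < 1 -> log_K_stable TC data trivial gamma.
Proof.
  intros gamma Hgamma t Ht.
  rewrite DF_log_affine.
  apply (affine_pos_shrink _ _ (1 - beta)).
  - exact (Hss t).
  - rewrite <- DF_log_affine; exact (Hlog t Ht).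
  - lra.
Qed.
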